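(* Let $A_1,A_2\in\mathbf{C}^{n\times n}$ and define $\Phi_1(t),\Phi_2(t)\in\mathbf{C}^{n\times n}$ by $$\begin{bmatrix}\Phi_1(t)\\ \Phi_2(t)\end{bmatrix}=\mathrm{e}^{t\{A_1,A_2\}_\diamond}\begin{bmatrix}I_n\\ 0_{n\times n}\end{bmatrix}\ (t\in\mathbf{R}),\qquad \begin{bmatrix}\Phi_1(t)\\ \Phi_2(t)\end{bmatrix}=\left(\{A_1,A_2\}_\diamond\right)^t\begin{bmatrix}I_n\\ 0_{n\times n}\end{bmatrix}\ (t\in\mathbf{Z}),$$ where in the case $t\in\mathbf{Z}$, $t<0$, the bimatrix $\{A_1,A_2\}$ is assumed nonsingular. Then $\{\Phi_1(t),\Phi_2(t)\}=\mathrm{e}^{t\{A_1,A_2\}}$ for $t\in\mathbf{R}$, and $\{\Phi_1(t),\Phi_2(t)\}=\{A_1,A_2\}^t$ for $t\in\mathbf{Z}$.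
   Context: $P^{\#}$ denotes entrywise conjugate. For $A_1,A_2\in\mathbf{C}^{n\times n}$ the bimatrix $\{A_1,A_2\}$ is the real-linear map $\mathbf{C}^n\to\mathbf{C}^n$, $x\mapsto A_1x+A_2^{\#}x^{\#}$; sums are pointwise, products are compositions, $\mathcal{I}_n=\{I_n,0\}$ is the identity, and equality means equality as maps. Powers: $\{A_1,A_2\}^0=\mathcal{I}_n$, $\{A_1,A_2\}^i=\{A_1,A_2\}\{A_1,A_2\}^{i-1}$ for $i\geq1$; if $\{A_1,A_2\}$ is nonsingular (has a two-sided inverse bimatrix), $\{A_1,A_2\}^{-i}$ is the $i$-th power of the inverse. Exponent: $\mathrm{e}^{t\{A_1,A_2\}}=\sum_{i=0}^\infty \frac{t^i}{i!}\{A_1,A_2\}^i$ (applied pointwise to $x$, convergent), $t\in\mathbf{R}$. Complex lifting: $\{A_1,A_2\}_\diamond=\begin{bmatrix}A_1 & A_2^{\#}\\ A_2 & A_1^{\#}\end{bmatrix}$. *)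

From mathcomp Require Import all_boot all_order all_algebra.
From mathcomp Require Import all_classical all_reals.
From mathcomp Require Export complex.
Import GRing.Theory Num.Theory.
Set Implicit Arguments.
Unset Strict Implicit.
Unset Printing Implicit Defensive.
Local Open Scope ring_scope.
Local Open Scope complex_scope.

Section Bimatrix.
Variable R : realType.
Local Notation C := R[i].

Definition mxconj (p q : nat) (P : 'M[C]_(p, q)) : 'M[C]_(p, q) :=
  map_mx (fun z : C => z^*) P.

(* the bimatrix {A1,A2} as the real-linear map x |-> A1 x + A2^# x^# *)
Definition bmx (n : nat) (A1 A2 : 'M[C]_n) (x : 'cV[C]_n) : 'cV[C]_n :=
  A1 *m x + mxconj A2 *m mxconj x.

Definition bmx_pow (n : nat) (A1 A2 : 'M[C]_n) (k : nat) : 'cV[C]_n -> 'cV[C]_n :=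
  iter k (bmx A1 A2).

Definition bmx_inverse (n : nat) (A1 A2 B1 B2 : 'M[C]_n) : Prop :=
  (forall x, bmx A1 A2 (bmx B1 B2 x) = x) /\ (forall x, bmx B1 B2 (bmx A1 A2 x) = x).

Definition cmx_cvg (p q : nat) (u : nat -> 'M[C]_(p, q)) (L : 'M[C]_(p, q)) : Prop :=
  forall e : R, 0 < e -> exists N : nat, forall k : nat, (N <= k)%N ->
    forall i j, `|u k i j - L i j| < e%:C.

Definition cmx_lim (p q : nat) (u : nat -> 'M[C]_(p, q)) : 'M[C]_(p, q) :=
  xget 0 (cmx_cvg u).

Definition mexp (m : nat) (t : R) (M : 'M[C]_m) : 'M[C]_m :=
  cmx_lim (fun N => \sum_(i < N) ((t ^+ i / (i`!)%:R)%:C *: M ^+ i)).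

Definition bmx_exp (n : nat) (t : R) (A1 A2 : 'M[C]_n) (x : 'cV[C]_n) : 'cV[C]_n :=
  cmx_lim (fun N => \sum_(i < N) ((t ^+ i / (i`!)%:R)%:C *: bmx_pow A1 A2 i x)).

Definition bmx_lift (n : nat) (A1 A2 : 'M[C]_n) : 'M[C]_(n + n) :=
  block_mx A1 (mxconj A2) A2 (mxconj A1).

Definition IO (n : nat) : 'M[C]_(n + n, n) := col_mx 1%:M 0.

End Bimatrix.

(** The complex lifting {A1,A2} |-> {A1,A2}_diamond intertwines a bimatrix with
    the conjugate pair [x; x^#]: {A1,A2}_diamond [x; x^#] = [y; y^#] where
    y = {A1,A2} x.  Hence lifts are closed under sums, real scalars and products,
    a lift M is recovered from its first block column M [I; 0], and a 2n x 2n
    matrix is determined by its action on conjugate pairs.  So powers, the inverse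
    and the partial sums of the exponential series of {A1,A2}_diamond are the
    lifts of the corresponding bimatrix powers, inverse and partial sums; the
    exponential follows in the limit, as reading the bimatrix off M [I; 0] and
    applying it to x is continuous in M. *)

From mathcomp Require Import all_boot all_order all_algebra.
From mathcomp Require Import all_classical all_reals.
From mathcomp Require Import complex.
From mathcomp Require Import topology normedtype sequences.
Import numFieldNormedType.Exports.
Import Order.TTheory GRing.Theory Num.Theory.
Set Implicit Arguments.
Unset Strict Implicit.
Unset Printing Implicit Defensive.
Local Open Scope ring_scope.
Local Open Scope complex_scope.

Section Bimatrices.
Variable R : realType.
Local Notation C := R[i].
Local Notation Re := complex.Re.
Local Notation Im := complex.Im.

(** * Bimatrices and their complex lifting *)

Lemma mxconjK p q (M : 'M[C]_(p, q)) : mxconj (mxconj M) = M.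
Proof. by apply/matrixP => i j; rewrite !mxE conjcK. Qed.

Lemma mxconj0 p q : mxconj (0 : 'M[C]_(p, q)) = 0.
Proof. exact: map_mx0. Qed.

Lemma mxconj1 p : mxconj (1%:M : 'M[C]_p) = 1%:M.
Proof. exact: map_mx1. Qed.

Lemma mxconjD p q (M N : 'M[C]_(p, q)) : mxconj (M + N) = mxconj M + mxconj N.
Proof. exact: map_mxD. Qed.

Lemma mxconjM p q r (M : 'M[C]_(p, q)) (N : 'M[C]_(q, r)) :
  mxconj (M *m N) = mxconj M *m mxconj N.
Proof. exact: map_mxM. Qed.

Lemma mxconjZ p q (c : C) (M : 'M[C]_(p, q)) : mxconj (c *: M) = c^* *: mxconj M.
Proof. exact: map_mxZ. Qed.

Lemma mxconjZR p q (c : R) (M : 'M[C]_(p, q)) :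
  mxconj (c%:C *: M) = c%:C *: mxconj M.
Proof.
by rewrite mxconjZ; congr (_ *: _); apply/eqP; rewrite eq_complex /= oppr0 !eqxx.
Qed.

Lemma mul_cVP p q (P Q : 'M[C]_(p, q)) :
  (forall x : 'cV[C]_q, P *m x = Q *m x) -> P = Q.
Proof.
move=> eqPQ; apply/trmx_inj/mul_rVP => u.
by rewrite -[u]trmxK -!trmx_mul eqPQ.
Qed.

Section Lift.
Variable n : nat.
Implicit Types (P Q : 'M[C]_n) (x : 'cV[C]_n).

Definition conjpair x : 'cV[C]_(n + n) := col_mx x (mxconj x).

Lemma bmxZi P Q x : bmx P Q ('i *: x) = 'i *: (P *m x - mxconj Q *m mxconj x).
Proof.
have conj_iZ : mxconj ('i *: x) = - ('i *: mxconj x).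
  by apply/matrixP => a b; rewrite !mxE; case: (x a b) => u v; apply/eqP; simpc.
by rewrite /bmx conj_iZ mulmxN -!scalemxAr scalerBr.
Qed.

Lemma bmx_eq0 P Q : (forall x, bmx P Q x = 0) -> P = 0 /\ Q = 0.
Proof.
move=> PQ0.
(* Comparing x with 'i *: x separates the C-linear part from the antilinear one. *)
have Px0 x : P *m x = 0.
  have i_neq0 : 'i != 0 :> C by rewrite eq_complex /= oner_eq0 andbF.
  have PQx0 : P *m x - mxconj Q *m mxconj x = 0.
    by apply/eqP; have /eqP := PQ0 ('i *: x); rewrite bmxZi scaler_eq0 (negPf i_neq0).
  have : bmx P Q x + (P *m x - mxconj Q *m mxconj x) = P *m x *+ 2.
    by rewrite /bmx addrACA subrr addr0.
  rewrite PQ0 PQx0 addr0 => /esym/eqP.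
  by rewrite -scaler_nat scaler_eq0 pnatr_eq0 => /eqP.
have P0 : P = 0 by apply: mul_cVP => x; rewrite Px0 mul0mx.
split=> //; rewrite -[Q]mxconjK -(mxconj0 n n); congr mxconj.
apply: mul_cVP => x; rewrite mul0mx -[x]mxconjK.
by have := PQ0 (mxconj x); rewrite /bmx P0 mul0mx add0r.
Qed.

Lemma bmx_lift_conjpair P Q x : bmx_lift P Q *m conjpair x = conjpair (bmx P Q x).
Proof.
rewrite /bmx_lift /conjpair mul_block_col /bmx mxconjD !mxconjM !mxconjK.
by rewrite [mxconj P *m _ + _]addrC.
Qed.

Lemma conjpair_mx_ext (M N : 'M[C]_(n + n)) :
  (forall x, M *m conjpair x = N *m conjpair x) -> M = N.
Proof.
move=> eqMN; apply/eqP; rewrite -subr_eq0; apply/eqP.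
set D := M - N; have Dx0 x : col_mx (bmx (ulsubmx D) (mxconj (ursubmx D)) x)
                                  (bmx (dlsubmx D) (mxconj (drsubmx D)) x) = 0.
  by rewrite /bmx !mxconjK -mul_block_col submxK mulmxBl eqMN subrr.
have [u0 r0] : ulsubmx D = 0 /\ mxconj (ursubmx D) = 0.
  by apply: bmx_eq0 => x; have /eqP := Dx0 x; rewrite col_mx_eq0 => /andP[/eqP].
have [d0 l0] : dlsubmx D = 0 /\ mxconj (drsubmx D) = 0.
  by apply: bmx_eq0 => x; have /eqP := Dx0 x; rewrite col_mx_eq0 => /andP[_ /eqP].
rewrite -[D]submxK -[ursubmx D]mxconjK -[drsubmx D]mxconjK r0 l0 u0 d0 mxconj0.
exact: block_mx0.
Qed.

Lemma bmx_lift_IO P Q : bmx_lift P Q *m IO R n = col_mx P Q.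
Proof. by rewrite /bmx_lift /IO mul_block_col !mulmx1 !mulmx0 !addr0. Qed.

Lemma bmx_liftD P Q P' Q' :
  bmx_lift P Q + bmx_lift P' Q' = bmx_lift (P + P') (Q + Q').
Proof. by rewrite /bmx_lift add_block_mx !mxconjD. Qed.

Lemma bmx_liftZ (c : R) P Q : c%:C *: bmx_lift P Q = bmx_lift (c%:C *: P) (c%:C *: Q).
Proof. by rewrite /bmx_lift scale_block_mx !mxconjZR. Qed.

Lemma bmx_liftM P Q P' Q' : bmx_lift P Q *m bmx_lift P' Q' =
  bmx_lift (P *m P' + mxconj Q *m Q') (Q *m P' + mxconj P *m Q').
Proof.
rewrite /bmx_lift mulmx_block !mxconjD !mxconjM !mxconjK.
by rewrite [mxconj Q *m _ + _]addrC [mxconj P *m _ + _]addrC.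
Qed.

Lemma bmx_lift0 : bmx_lift 0 0 = 0 :> 'M[C]_(n + n).
Proof. by rewrite /bmx_lift mxconj0 block_mx0. Qed.

Lemma bmx_lift1 : bmx_lift 1%:M 0 = 1%:M :> 'M[C]_(n + n).
Proof. by rewrite /bmx_lift mxconj0 mxconj1 scalar_mx_block. Qed.

Definition is_bmx_lift (M : 'M[C]_(n + n)) : Prop := exists P Q, M = bmx_lift P Q.

Lemma is_bmx_lift0 : is_bmx_lift 0.
Proof. by exists 0, 0; rewrite bmx_lift0. Qed.

Lemma is_bmx_liftD M N : is_bmx_lift M -> is_bmx_lift N -> is_bmx_lift (M + N).
Proof. by move=> [P [Q ->]] [P' [Q' ->]]; rewrite bmx_liftD; do 2!eexists. Qed.

Lemma is_bmx_liftZ (c : R) M : is_bmx_lift M -> is_bmx_lift (c%:C *: M).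
Proof. by move=> [P [Q ->]]; rewrite bmx_liftZ; do 2!eexists. Qed.

Lemma is_bmx_lift_pow M k : is_bmx_lift M -> is_bmx_lift (M ^+ k).
Proof.
move=> [P [Q ->]]; elim: k => [|k [P' [Q' IH]]].
  by exists 1%:M, 0; rewrite expr0 bmx_lift1.
by rewrite exprS IH -mulmxE bmx_liftM; do 2!eexists.
Qed.

Lemma is_bmx_lift_series (c : nat -> R) M N : is_bmx_lift M ->
  is_bmx_lift (\sum_(i < N) (c i)%:C *: M ^+ i).
Proof.
move=> liftM; apply: big_ind => //; [exact: is_bmx_lift0 | exact: is_bmx_liftD |].
by move=> i _; apply/is_bmx_liftZ/is_bmx_lift_pow.
Qed.

Definition bmx_of (M : 'M[C]_(n + n)) : 'cV[C]_n -> 'cV[C]_n :=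
  bmx (usubmx (M *m IO R n)) (dsubmx (M *m IO R n)).

Lemma bmx_of_lift P Q x : bmx_of (bmx_lift P Q) x = bmx P Q x.
Proof. by rewrite /bmx_of bmx_lift_IO col_mxKu col_mxKd. Qed.

Lemma bmx_ofE M x : is_bmx_lift M -> bmx_of M x = usubmx (M *m conjpair x).
Proof. by move=> [P [Q ->]]; rewrite bmx_of_lift bmx_lift_conjpair col_mxKu. Qed.

Lemma bmx_lift_pow_conjpair (A1 A2 : 'M[C]_n) k x :
  bmx_lift A1 A2 ^+ k *m conjpair x = conjpair (bmx_pow A1 A2 k x).
Proof.
elim: k => [|k IH]; first by rewrite expr0 mul1mx.
by rewrite exprS -mulmxE -mulmxA IH bmx_lift_conjpair /bmx_pow iterS.
Qed.

Lemma bmx_of_pow (A1 A2 : 'M[C]_n) k x :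
  bmx_of (bmx_lift A1 A2 ^+ k) x = bmx_pow A1 A2 k x.
Proof.
rewrite bmx_ofE ?bmx_lift_pow_conjpair ?col_mxKu //.
by apply: is_bmx_lift_pow; do 2!eexists.
Qed.

Lemma invmx_bmx_lift (A1 A2 B1 B2 : 'M[C]_n) : bmx_inverse A1 A2 B1 B2 ->
  invmx (bmx_lift A1 A2) = bmx_lift B1 B2.
Proof.
(* A one-sided inverse suffices for square matrices. *)
move=> [_ BA]; have BA1 : bmx_lift B1 B2 *m bmx_lift A1 A2 = 1%:M.
  by apply: conjpair_mx_ext => x; rewrite mul1mx -mulmxA !bmx_lift_conjpair BA.
have [_ unitA] := mulmx1_unit BA1.
by rewrite -[LHS]mul1mx -BA1 mulmxK.
Qed.

End Lift.

(** * Entrywise convergence of complex matrices *)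

Lemma normc_Re (z : C) : `|z| = (Re `|z|)%:C.
Proof. by rewrite normc_def. Qed.

Lemma normcR (r : R) : `|r%:C| = `|r|%:C.
Proof. by rewrite normc_def /= expr0n /= addr0 sqrtr_sqr. Qed.

Lemma normc_i : `|'i : C| = 1.
Proof. by rewrite normc_def /= expr0n /= add0r expr1n sqrtr1. Qed.

Lemma normc_ge_Im (z : C) : `|Im z|%:C <= `|z|.
Proof.
by have := normc_ge_Re (z * 'i); rewrite ReiNIm normrN normrM normc_i mulr1.
Qed.

Lemma normc_complex_le (a b : R) : `|a +i* b| <= (`|a| + `|b|)%:C.
Proof.
have -> : a +i* b = a%:C + b%:C * 'i by apply/eqP; simpc.
apply: le_trans (ler_normD _ _) _.
by rewrite normrM normc_i mulr1 !normcR -rmorphD.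
Qed.

Definition ccvg (u : nat -> C) (l : C) : Prop :=
  forall e : R, 0 < e -> exists N, forall k, (N <= k)%N -> `|u k - l| < e%:C.

Lemma ccvg_uniq u l l' : ccvg u l -> ccvg u l' -> l = l'.
Proof.
move=> ul ul'; apply/eqP/negPn/negP => neq; set d := Re `|l - l'|.
have d2_gt0 : 0 < d / 2 by rewrite divr_gt0 // -ltcR -normc_Re normr_gt0 subr_eq0.
have [N1 h1] := ul _ d2_gt0; have [N2 h2] := ul' _ d2_gt0.
set k := maxn N1 N2.
have : `|l - l'| < d%:C.
  have -> : l - l' = (u k - l') - (u k - l) by rewrite opprB [RHS]addrC addrA subrK.
  apply: le_lt_trans (ler_normB _ _) _.
  by rewrite [d]splitr rmorphD ltrD ?h1 ?h2 ?leq_maxl ?leq_maxr.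
by rewrite normc_Re ltxx.
Qed.

Lemma ccvg_cst l : ccvg (fun=> l) l.
Proof. by move=> e e0; exists 0%N => k _; rewrite subrr normr0 ltcR. Qed.

Lemma ccvgD u v l l' : ccvg u l -> ccvg v l' -> ccvg (fun k => u k + v k) (l + l').
Proof.
move=> ul vl' e e0; have e2_gt0 : 0 < e / 2 by rewrite divr_gt0.
have [N1 h1] := ul _ e2_gt0; have [N2 h2] := vl' _ e2_gt0.
exists (maxn N1 N2) => k; rewrite geq_max => /andP[kN1 kN2].
rewrite opprD addrACA; apply: le_lt_trans (ler_normD _ _) _.
by rewrite [e]splitr rmorphD ltrD ?h1 ?h2.
Qed.

Lemma ccvgMr u l b : ccvg u l -> ccvg (fun k => u k * b) (l * b).
Proof.
move=> ul e e0; set e' := e / (Re `|b| + 1).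
have nb_ge0 : 0 <= Re `|b| by rewrite normc_def sqrtr_ge0.
have e'_gt0 : 0 < e' by rewrite divr_gt0 // ltr_wpDl.
have [N h] := ul _ e'_gt0; exists N => k /h ukl.
rewrite -mulrBl normrM; apply: le_lt_trans (ler_wpM2r _ (ltW ukl)) _ => //.
rewrite normc_Re -rmorphM ltcR -[ltRHS](divfK (lt0r_neq0 (ltr_wpDl nb_ge0 ltr01))).
by rewrite ltr_pM2l // ltrDl.
Qed.

Lemma ccvg_conj u l : ccvg u l -> ccvg (fun k => (u k)^*) l^*.
Proof. by move=> ul e /ul [N h]; exists N => k /h; rewrite -rmorphB normcJ. Qed.

Lemma ccvg_sum (I : Type) (r : seq I) (u : I -> nat -> C) (l : I -> C) :
  (forall i, ccvg (u i) (l i)) ->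
  ccvg (fun k => \sum_(i <- r) u i k) (\sum_(i <- r) l i).
Proof.
move=> ul; elim: r => [|i r IH].
  have -> : (fun k => \sum_(i <- [::]) u i k) = fun=> 0.
    by apply: funext => k; rewrite big_nil.
  by rewrite big_nil; exact: ccvg_cst.
have -> : (fun k => \sum_(j <- i :: r) u j k) = fun k => u i k + \sum_(j <- r) u j k.
  by apply: funext => k; rewrite big_cons.
by rewrite big_cons; apply: ccvgD.
Qed.

Lemma cmx_cvgP p q (u : nat -> 'M[C]_(p, q)) L :
  cmx_cvg u L <-> forall i j, ccvg (fun k => u k i j) (L i j).
Proof.
split=> [uL i j e /uL [N h] | uL e e0]; first by exists N => k /h.
have /choice [N hN] : forall ij : 'I_p * 'I_q, exists N, forall k, (N <= k)%N ->
    `|u k ij.1 ij.2 - L ij.1 ij.2| < e%:C by move=> [i j]; exact: uL.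
exists (\max_ij N ij) => k Nk i j; apply: (hN (i, j)).
exact: leq_trans (leq_bigmax (i, j)) Nk.
Qed.

Lemma cmx_cvg_entrywise p q (u : nat -> 'M[C]_(p, q)) :
  (forall i j, exists l, ccvg (fun k => u k i j) l) -> exists L, cmx_cvg u L.
Proof.
move=> ul; have /choice [l hl] : forall ij : 'I_p * 'I_q,
    exists l, ccvg (fun k => u k ij.1 ij.2) l by move=> [i j]; exact: ul.
exists (\matrix_(i, j) l (i, j)); apply/cmx_cvgP => i j.
by rewrite mxE; exact: (hl (i, j)).
Qed.

Lemma cmx_cvg_uniq p q (u : nat -> 'M[C]_(p, q)) L L' :
  cmx_cvg u L -> cmx_cvg u L' -> L = L'.
Proof.
move=> /cmx_cvgP uL /cmx_cvgP uL'; apply/matrixP => i j.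
exact: ccvg_uniq (uL i j) (uL' i j).
Qed.

Lemma cmx_limE p q (u : nat -> 'M[C]_(p, q)) L : cmx_cvg u L -> cmx_lim u = L.
Proof.
move=> uL; have uL_ex : exists L, cmx_cvg u L by exists L.
exact: cmx_cvg_uniq (xgetPex 0 uL_ex) uL.
Qed.

Lemma cmx_cvgD p q (u v : nat -> 'M[C]_(p, q)) L L' :
  cmx_cvg u L -> cmx_cvg v L' -> cmx_cvg (fun k => u k + v k) (L + L').
Proof.
move=> /cmx_cvgP uL /cmx_cvgP vL'; apply/cmx_cvgP => i j.
under eq_fun do rewrite mxE; rewrite mxE; exact: ccvgD.
Qed.

Lemma cmx_cvgMr p q r (u : nat -> 'M[C]_(p, q)) L (B : 'M[C]_(q, r)) :
  cmx_cvg u L -> cmx_cvg (fun k => u k *m B) (L *m B).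
Proof.
move=> /cmx_cvgP uL; apply/cmx_cvgP => i j.
under eq_fun do rewrite mxE; rewrite mxE.
by apply: ccvg_sum => l; apply: ccvgMr.
Qed.

Lemma cmx_cvg_conj p q (u : nat -> 'M[C]_(p, q)) L :
  cmx_cvg u L -> cmx_cvg (fun k => mxconj (u k)) (mxconj L).
Proof.
move=> /cmx_cvgP uL; apply/cmx_cvgP => i j.
under eq_fun do rewrite mxE; rewrite mxE; exact: ccvg_conj.
Qed.

Lemma cmx_cvg_usub p q r (u : nat -> 'M[C]_(p + q, r)) L :
  cmx_cvg u L -> cmx_cvg (fun k => usubmx (u k)) (usubmx L).
Proof. by move=> uL e /uL [N h]; exists N => k /h Nk i j; rewrite !mxE. Qed.

Lemma cmx_cvg_dsub p q r (u : nat -> 'M[C]_(p + q, r)) L :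
  cmx_cvg u L -> cmx_cvg (fun k => dsubmx (u k)) (dsubmx L).
Proof. by move=> uL e /uL [N h]; exists N => k /h Nk i j; rewrite !mxE. Qed.

Lemma real_series_dominated (r b : nat -> R) :
  (forall i, `|r i| <= b i) -> cvgn (series b) ->
  exists l, forall e, 0 < e -> exists N, forall k, (N <= k)%N ->
    `|\sum_(i < k) r i - l| < e.
Proof.
move=> rb cvg_b; have cvg_r : cvgn (series r).
  apply: normed_cvg; apply: (series_le_cvg _ _ rb cvg_b) => // i.
  exact: le_trans (rb i).
exists (limn (series r)) => e e_gt0.
have [N _ hN] := cvgr_dist_lt _ _ cvg_r _ e_gt0.
by exists N => k /hN; rewrite distrC -(big_mkord xpredT).
Qed.

Lemma sum_complex (a : nat -> C) k :
  \sum_(i < k) a i = (\sum_(i < k) Re (a i)) +i* (\sum_(i < k) Im (a i)).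
Proof.
elim: k => [|k IH]; first by rewrite !big_ord0.
by rewrite !big_ord_recr /= IH; case: (a k).
Qed.

Lemma complex_series_dominated (a : nat -> C) (b : nat -> R) :
  (forall i, `|a i| <= (b i)%:C) -> cvgn (series b) ->
  exists l, ccvg (fun k => \sum_(i < k) a i) l.
Proof.
move=> ab cvg_b.
have Re_le i : `|Re (a i)| <= b i by rewrite -lecR (le_trans (normc_ge_Re _)).
have Im_le i : `|Im (a i)| <= b i by rewrite -lecR (le_trans (normc_ge_Im _)).
have [lr hr] := real_series_dominated Re_le cvg_b.
have [li hi] := real_series_dominated Im_le cvg_b.
exists (lr +i* li) => e e_gt0; have e2_gt0 : 0 < e / 2 by rewrite divr_gt0.
have [N1 h1] := hr _ e2_gt0; have [N2 h2] := hi _ e2_gt0.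
exists (maxn N1 N2) => k; rewrite geq_max => /andP[kN1 kN2].
rewrite sum_complex; apply: le_lt_trans (normc_complex_le _ _) _.
by rewrite ltcR [e]splitr ltrD ?h1 ?h2.
Qed.

Lemma normc_mx_pow_le m (M : 'M[C]_m) k (i j : 'I_m) :
  `|(M ^+ k) i j| <= (\sum_a \sum_b `|M a b|) ^+ k.
Proof.
set K := \sum_a \sum_b `|M a b|.
have K_ge0 : 0 <= K by rewrite sumr_ge0 // => a _; rewrite sumr_ge0.
have row_le l : \sum_b `|M l b| <= K.
  by rewrite /K [X in _ <= X](bigD1 l) //= lerDl sumr_ge0 // => a _; rewrite sumr_ge0.
elim: k i j => [|k IH] i j.
  by rewrite expr0 mxE; case: (i == j); rewrite ?normr1 ?normr0.
rewrite exprS -mulmxE mxE; apply: le_trans (ler_norm_sum _ _ _) _.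
apply: (@le_trans _ _ (\sum_b `|M i b| * K ^+ k)).
  by apply: ler_sum => b _; rewrite normrM ler_wpM2l.
by rewrite -mulr_suml exprS ler_wpM2r ?exprn_ge0.
Qed.

Lemma mx_exp_series_cvg m (t : R) (M : 'M[C]_m) :
  exists L, cmx_cvg (fun N => \sum_(i < N) ((t ^+ i / (i`!)%:R)%:C *: M ^+ i)) L.
Proof.
apply: cmx_cvg_entrywise => i j; set K := \sum_a \sum_b `|M a b|.
have K_real : K = (Re K)%:C.
  by rewrite RRe_real // ger0_real // sumr_ge0 // => a _; rewrite sumr_ge0.
pose a l := (t ^+ l / (l`!)%:R)%:C * (M ^+ l) i j.
have -> : (fun N => (\sum_(l < N) ((t ^+ l / (l`!)%:R)%:C *: M ^+ l)) i j) =
    fun N => \sum_(l < N) a l.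
  by apply: funext => N; rewrite summxE; apply: eq_bigr => l _; rewrite mxE.
apply: (@complex_series_dominated a _ _ (is_cvg_series_exp_coeff (`|t| * Re K))).
move=> k; rewrite /a.
rewrite normrM normcR; apply: le_trans (ler_wpM2l _ (normc_mx_pow_le _ _ _ _)) _.
  by rewrite lecR.
rewrite -/K K_real -rmorphXn -rmorphM lecR /exp_coeff /=.
by rewrite exprMn normrM normfV normrX [`|_%:R|]ger0_norm // mulrAC.
Qed.

Lemma mexp_cvg m (t : R) (M : 'M[C]_m) :
  cmx_cvg (fun N => \sum_(i < N) ((t ^+ i / (i`!)%:R)%:C *: M ^+ i)) (mexp t M).
Proof. exact (xgetPex 0 (mx_exp_series_cvg t M)). Qed.

(** * The exponential of a bimatrix *)

Section Exponential.
Variable n : nat.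

Lemma cmx_cvg_bmx_of (u : nat -> 'M[C]_(n + n)) L x :
  cmx_cvg u L -> cmx_cvg (fun k => bmx_of (u k) x) (bmx_of L x).
Proof.
move=> uL; apply: cmx_cvgD; apply: cmx_cvgMr.
  by apply: cmx_cvg_usub; apply: cmx_cvgMr.
by apply: cmx_cvg_conj; apply: cmx_cvg_dsub; apply: cmx_cvgMr.
Qed.

Lemma bmx_of_mexp (A1 A2 : 'M[C]_n) t x :
  bmx_of (mexp t (bmx_lift A1 A2)) x = bmx_exp t A1 A2 x.
Proof.
have partial_sums N :
    bmx_of (\sum_(i < N) ((t ^+ i / (i`!)%:R)%:C *: bmx_lift A1 A2 ^+ i)) x =
    \sum_(i < N) ((t ^+ i / (i`!)%:R)%:C *: bmx_pow A1 A2 i x).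
  rewrite bmx_ofE; last first.
    by apply: (is_bmx_lift_series (fun i => t ^+ i / (i`!)%:R)); do 2!eexists.
  rewrite mulmx_suml linear_sum; apply: eq_bigr => i _.
  by rewrite -scalemxAl linearZ /= bmx_lift_pow_conjpair col_mxKu.
have := cmx_cvg_bmx_of x (mexp_cvg t (bmx_lift A1 A2)).
by rewrite (funext partial_sums) => /cmx_limE.
Qed.

End Exponential.
End Bimatrices.

Theorem lemma8 (R : realType) (n : nat) (A1 A2 : 'M[R[i]]_n) :
  (* t real: [Phi1; Phi2] = e^{t {A1,A2}_diamond} [I; 0]  ==>  {Phi1,Phi2} = e^{t{A1,A2}} *)
  (forall t : R,
     let Phi := mexp t (bmx_lift A1 A2) *m (@IO R n) in
     forall x, bmx (usubmx Phi) (dsubmx Phi) x = bmx_exp t A1 A2 x) /\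
  (* t = k in Z, k >= 0 *)
  (forall k : nat,
     let Phi := bmx_lift A1 A2 ^+ k *m (@IO R n) in
     forall x, bmx (usubmx Phi) (dsubmx Phi) x = bmx_pow A1 A2 k x) /\
  (* t = -(k+1) in Z, {A1,A2} nonsingular with inverse {B1,B2} *)
  (forall B1 B2 : 'M[R[i]]_n, bmx_inverse A1 A2 B1 B2 ->
   forall k : nat,
     let Phi := invmx (bmx_lift A1 A2) ^+ k.+1 *m (@IO R n) in
     forall x, bmx (usubmx Phi) (dsubmx Phi) x = bmx_pow B1 B2 k.+1 x).
Proof.
split; first exact: bmx_of_mexp.
split; first exact: bmx_of_pow.
by move=> B1 B2 invB k /= x; rewrite (invmx_bmx_lift invB); apply: bmx_of_pow.
Qed.
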